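(* Let $A,B\subseteq \mathbb{R}^2$ be finite two-dimensional subsets (i.e., neither is contained in a line) with $0\in A\cap B$. Let $m$ and $n$ be the exact number of vertical lines which cover $A$ and $B$ respectively. Suppose $$|A+B|=\left(\frac{|A|}{m}+\frac{|B|}{n}-1\right)(m+n-1).$$ Then there exists a linear transformation $\varphi:\mathbb{R}^2\to\mathbb{R}^2$ of the form $\varphi(x,y)=(\alpha^{-1}x,\beta^{-1}y)$ for some positive reals $\alpha,\beta$, such that $\varphi(A)$ and $\varphi(B)$ are standard trapezoids $T(m,h,c,d)$ and $T(n,h',c,d)$ respectively, with common slopes $c$ and $d$ (for some integers $h,h'\ge 1$).
   Context: $A+B=\{a+b: a\in A, b\in B\}$ and $|X|$ denotes cardinality. Standard trapezoid: let $m\ge 1$, $h\ge 1$ be integers and $c,d\in\mathbb{R}$ with $c-d\in\mathbb{Z}$ and $h-1+(m-1)c\ge (m-1)d$. A standard trapezoid $T(m,h,c,d)$ is any translate of the finite set $T$ consisting of the points $(x,y)$ of the lattice $\{a(0,1)+b(1,d): a,b\in\mathbb{Z}\}$ satisfying $0\le x\le m-1$, $y\le cx+h-1$ and $y\ge dx$. *)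

From HB Require Import structures.
From mathcomp Require Import all_boot all_order all_algebra.
From mathcomp Require Import finmap.
From mathcomp Require Import reals.
Set Implicit Arguments. Unset Strict Implicit. Unset Printing Implicit Defensive.
Import Order.TTheory GRing.Theory Num.Theory.
Local Open Scope ring_scope.


Section Defs.
Variable R : realType.

Definition sumset (A B : {fset R * R}) : {fset R * R} :=
  [fset ((a.1 + b.1)%R, (a.2 + b.2)%R) | a : R * R in A, b : R * R in B]%fset.

Definition in_a_line (A : {fset R * R}) : Prop :=
  exists a b c : R, (a != 0 \/ b != 0) /\
    forall p, p \in A -> a * p.1 + b * p.2 = c.

(* number of vertical lines needed to cover A = number of distinct x-coordinates *)
Definition nvert (A : {fset R * R}) : nat := #|` [fset p.1 | p in A]%fset |%fset.

(* the untranslated set T: points of the lattice {a(0,1) + b(1,d)} with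
   0 <= x <= m-1, y <= c x + h - 1, y >= d x *)
Definition in_T (m h : nat) (c d : R) (p : R * R) : Prop :=
  (exists a b : int, p = (b%:~R, a%:~R + b%:~R * d)) /\
  0 <= p.1 /\ p.1 <= m%:R - 1 /\
  p.2 <= c * p.1 + h%:R - 1 /\ d * p.1 <= p.2.

Definition std_trapezoid (S : R * R -> Prop) (m h : nat) (c d : R) : Prop :=
  (1 <= m)%N /\ (1 <= h)%N /\ (exists z : int, c - d = z%:~R) /\
  (m%:R - 1) * d <= h%:R - 1 + (m%:R - 1) * c /\
  exists t : R * R, forall p, S p <-> in_T m h c d (p.1 - t.1, p.2 - t.2).

Definition scaled_image (alpha beta : R) (A : {fset R * R}) : R * R -> Prop :=
  fun q => exists2 p, p \in A & q = (alpha^-1 * p.1, beta^-1 * p.2).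

End Defs.

From HB Require Import structures.
From mathcomp Require Import all_boot all_order all_algebra.
From mathcomp Require Import finmap.
From mathcomp Require Import reals.
From mathcomp Require Import ring lra zify.
Set Implicit Arguments. Unset Strict Implicit. Unset Printing Implicit Defensive.
Import Order.TTheory GRing.Theory Num.Theory.
Local Open Scope fset_scope.
Local Open Scope ring_scope.

(* Let m and n count the columns (distinct abscissae) of A and B and set
     deficiency A B = |A + B| + (m + n - 1) - (|A|/m + |B|/n) (m + n - 1),
   which the hypothesis makes 0.  When m > 1, removing the last column of A lowers
   the deficiency by the sum of imbalance A B / (m - 1), the number of points of
   A + B that are neither in (A minus its last column) + B nor in the sum of the two
   last columns, and the Cauchy-Davenport excess of the two last columns.  The
   last two terms are nonnegative and imbalance is antisymmetric, so by induction
   the deficiency is nonnegative; when it vanishes, every term vanishes, for every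
   pair of column prefixes as well.  Hence consecutive columns satisfy
   X_(k-1) + Y_l = X_k + Y_(l-1) and any two columns have a Cauchy-Davenport critical
   sum.  The first fact makes the abscissae of A and B progressions with a common
   difference d and the column minima and maxima affine in the column index; the
   second, the one-dimensional case of the whole argument, makes all columns
   progressions with a common difference b.  Non-collinearity provides two columns
   in each set and a column with two points.  Scaling by (1/d, 1/b) yields the
   trapezoids. *)

Lemma fset_neq0 (T : choiceType) (X : {fset T}) x : x \in X -> X != fset0.
Proof. by move=> Hx; apply/fset0Pn; exists x. Qed.

Section FinsetsOfReals.
Variable R : realType.
Implicit Types (X Y S : {fset R}) (x y t : R).

Definition fmax X : R := foldr Num.max (head 0 (enum_fset X)) (enum_fset X).
Definition fmin X : R := foldr Num.min (head 0 (enum_fset X)) (enum_fset X).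

Lemma foldr_max_spec (x0 : R) (s : seq R) :
  foldr Num.max x0 s \in x0 :: s /\ forall y, y \in s -> y <= foldr Num.max x0 s.
Proof.
elim: s => [|a s [IH1 IH2]] /=; first by rewrite mem_seq1 eqxx.
split=> [|y]; last first.
  by rewrite inE le_max => /orP [/eqP ->|/IH2 ->]; rewrite ?lexx ?orbT.
case: (leP a (foldr Num.max x0 s)) => _; last by rewrite !inE eqxx orbT.
by move: IH1; rewrite !inE => /orP [->|->]; rewrite ?orbT.
Qed.

Lemma foldr_min_spec (x0 : R) (s : seq R) :
  foldr Num.min x0 s \in x0 :: s /\ forall y, y \in s -> foldr Num.min x0 s <= y.
Proof.
elim: s => [|a s [IH1 IH2]] /=; first by rewrite mem_seq1 eqxx.
split=> [|y]; last first.
  by rewrite inE ge_min => /orP [/eqP ->|/IH2 ->]; rewrite ?lexx ?orbT.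
case: (leP a (foldr Num.min x0 s)) => _; first by rewrite !inE eqxx orbT.
by move: IH1; rewrite !inE => /orP [->|->]; rewrite ?orbT.
Qed.

Lemma head_enum_fset_mem X : X != fset0 -> head 0 (enum_fset X) \in X.
Proof.
move=> /fset0Pn [x]; change (x \in enum_fset X -> head 0 (enum_fset X) \in enum_fset X).
by case: (enum_fset X) => //= a s _; rewrite mem_head.
Qed.

Lemma fmax_mem X : X != fset0 -> fmax X \in X.
Proof.
rewrite /fmax => HX; have [+ _] := foldr_max_spec (head 0 (enum_fset X)) (enum_fset X).
by rewrite inE => /orP [/eqP ->|//]; exact: head_enum_fset_mem.
Qed.

Lemma fmin_mem X : X != fset0 -> fmin X \in X.
Proof.
rewrite /fmin => HX; have [+ _] := foldr_min_spec (head 0 (enum_fset X)) (enum_fset X).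
by rewrite inE => /orP [/eqP ->|//]; exact: head_enum_fset_mem.
Qed.

Lemma fmax_ge X x : x \in X -> x <= fmax X.
Proof. by have [_] := foldr_max_spec (head 0 (enum_fset X)) (enum_fset X); apply. Qed.

Lemma fmin_le X x : x \in X -> fmin X <= x.
Proof. by have [_] := foldr_min_spec (head 0 (enum_fset X)) (enum_fset X); apply. Qed.

Lemma fmax_lt X x : x \in X -> x != fmax X -> x < fmax X.
Proof. by move=> Hx Hne; rewrite lt_neqAle Hne fmax_ge. Qed.

Lemma fmax_eq X x : x \in X -> (forall y, y \in X -> y <= x) -> fmax X = x.
Proof.
move=> Hx H; apply/le_anti; rewrite fmax_ge // andbT.
exact/H/fmax_mem/(fset_neq0 Hx).
Qed.

Lemma fmin_eq X x : x \in X -> (forall y, y \in X -> x <= y) -> fmin X = x.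
Proof.
move=> Hx H; apply/le_anti; rewrite fmin_le //=.
exact/H/fmin_mem/(fset_neq0 Hx).
Qed.

Lemma fset1_fmin X x : #|` X| = 1%N -> x \in X -> x = fmin X.
Proof.
move/eqP/cardfs1P => [z ->]; rewrite in_fset1 => /eqP ->.
by apply/esym/fmin_eq; rewrite ?in_fset1 // => y; rewrite in_fset1 => /eqP ->.
Qed.

Definition rsumset X Y : {fset R} := [fset x + y | x in X, y in Y].

Lemma rsumsetP X Y z :
  reflect (exists2 x, x \in X & exists2 y, y \in Y & z = x + y) (z \in rsumset X Y).
Proof. exact: imfset2P. Qed.

Lemma rsumset_mem X Y x y : x \in X -> y \in Y -> x + y \in rsumset X Y.
Proof. by move=> Hx Hy; apply/rsumsetP; exists x => //; exists y. Qed.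

Lemma rsumsetC X Y : rsumset X Y = rsumset Y X.
Proof.
by apply/fsetP => z; apply/rsumsetP/rsumsetP => -[x Hx [y Hy ->]];
  exists y => //; exists x => //; rewrite addrC.
Qed.

Lemma fmax_rsumset X Y : X != fset0 -> Y != fset0 -> fmax (rsumset X Y) = fmax X + fmax Y.
Proof.
move=> HX HY; apply: fmax_eq; first by apply: rsumset_mem; apply: fmax_mem.
by move=> z /rsumsetP [x Hx [y Hy ->]]; apply: lerD; exact: fmax_ge.
Qed.

Lemma fmin_rsumset X Y : X != fset0 -> Y != fset0 -> fmin (rsumset X Y) = fmin X + fmin Y.
Proof.
move=> HX HY; apply: fmin_eq; first by apply: rsumset_mem; apply: fmin_mem.
by move=> z /rsumsetP [x Hx [y Hy ->]]; apply: lerD; exact: fmin_le.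
Qed.

Lemma card_rsumset1 x Y : #|` rsumset [fset x] Y| = #|` Y|.
Proof.
have -> : rsumset [fset x] Y = [fset x + y | y in Y].
  apply/fsetP => z; apply/rsumsetP/imfsetP => [[x' + [y Hy ->]]|[y Hy ->]].
    by rewrite in_fset1 => /eqP ->; exists y.
  by exists x; rewrite ?in_fset1 //; exists y.
by rewrite card_imfset //=; exact: addrI.
Qed.

(* Removing [fmax X] from [X] removes at least [fmax X + fmax Y] from the sumset. *)
Lemma cauchy_davenport X Y : X != fset0 -> Y != fset0 ->
  (#|` X| + #|` Y| <= #|` rsumset X Y| + 1)%N.
Proof.
move Hk: #|` X| => k; elim: k X Hk => [|k IH] X Hk HX HY.
  by move: HX; rewrite -cardfs_eq0 Hk.
set x := fmax X; have Hx : x \in X by apply: fmax_mem.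
case: (eqVneq (X `\ x) fset0) => H0.
  have EX : X = [fset x].
    by apply/fsetP => z; rewrite in_fset1; move/fsetP: H0 => /(_ z);
      rewrite in_fsetD1 in_fset0; case: eqP => [->|].
  by move: Hk; rewrite EX card_rsumset1 cardfs1 => <-; rewrite addnC.
have Hk' : #|` X `\ x| = k by move: (cardfsD1 x X); rewrite Hx Hk add1n => -[].
have Hnew : x + fmax Y \notin rsumset (X `\ x) Y.
  apply/negP => /rsumsetP [x' + [y' Hy' E]]; rewrite in_fsetD1 => /andP [Hne Hx'].
  have : x' + y' < x + fmax Y by apply: ltr_leD; [apply: fmax_lt | apply: fmax_ge].
  by rewrite E ltxx.
have Hsub : (x + fmax Y) |` rsumset (X `\ x) Y `<=` rsumset X Y.
  apply/fsubsetP => z; rewrite in_fset1U => /orP [/eqP ->|/rsumsetP [x' + [y' Hy' ->]]].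
    by apply: rsumset_mem; rewrite ?fmax_mem.
  by rewrite in_fsetD1 => /andP [_ Hx']; apply: rsumset_mem.
have Hlt := fsubset_leq_card Hsub; rewrite cardfsU1 Hnew add1n in Hlt.
by rewrite addSn; apply: leq_ltn_trans (IH _ Hk' H0 HY) _; rewrite ltn_add2r.
Qed.

End FinsetsOfReals.

Section ArithmeticProgressions.
Variable R : realType.
Implicit Types (S : {fset R}) (b d t u : R).

Definition below S t := [fset u in S | u < t].

Definition is_ap S x0 b (q : nat) :=
  forall u, u \in S <-> exists2 j, (j < q)%N & u = x0 + j%:R * b.

Lemma below_fmax_lt S t : below S t != fset0 -> fmax (below S t) < t.
Proof. by move/fmax_mem; rewrite !inE /= => /andP []. Qed.

Lemma below_fmax_mem S t : below S t != fset0 -> fmax (below S t) \in S.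
Proof. by move/fmax_mem; rewrite !inE /= => /andP []. Qed.

Lemma card_below_lt S u : u \in S -> (#|` below S u| < #|` S|)%N.
Proof.
move=> Hu; apply: fproper_ltn_card; rewrite fproperE; apply/andP; split.
  by apply/fsubsetP => v; rewrite !inE /= => /andP [].
by apply/negP => /fsubsetP /(_ u Hu); rewrite !inE /= ltxx andbF.
Qed.

Lemma card_below_pred S u : below S u != fset0 ->
  #|` below S u| = (#|` below S (fmax (below S u))|).+1.
Proof.
move=> Hb; set u' := fmax (below S u).
have : u' \in below S u by apply: fmax_mem.
rewrite inE /= => /andP [Hu'S Hu'u].
have -> : below S u = u' |` below S u'.
  apply/fsetP => v; rewrite in_fset1U !inE /=.
  apply/andP/orP => [[Hv Hvu]|[/eqP ->|/andP [Hv Hvu']]]; last 2 first.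
  - by [].
  - by split => //; exact: lt_trans Hvu' _.
  have : v <= u' by apply: fmax_ge; rewrite !inE /= Hv Hvu.
  by rewrite le_eqVlt => /orP [->|->]; [left | right; rewrite Hv].
by rewrite cardfsU1 !inE /= ltxx andbF.
Qed.

Lemma below_fmax S : below S (fmax S) = S `\ fmax S.
Proof.
apply/fsetP => v; rewrite !inE /=; case: (boolP (v \in S)) => Hv; rewrite ?andbF ?andbT //.
by rewrite lt_neqAle fmax_ge // andbT.
Qed.

Lemma card_below_fmax S : S != fset0 -> #|` below S (fmax S)| = (#|` S|).-1.
Proof. by move=> HS; rewrite below_fmax (cardfsD1 (fmax S) S) fmax_mem. Qed.

Lemma below_fmax_neq0 S : (1 < #|` S|)%N -> below S (fmax S) != fset0.
Proof.
move=> H; have HS : S != fset0 by rewrite -cardfs_gt0; lia.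
by rewrite -cardfs_gt0 card_below_fmax //; lia.
Qed.

Section ConstantGaps.
Variables (S : {fset R}) (d : R).
Hypothesis HS : S != fset0.
Hypothesis Hgap : forall t, t \in S -> below S t != fset0 -> t - fmax (below S t) = d.

Lemma eq_fmin_card_below u : u \in S -> u = fmin S + (#|` below S u|)%:R * d.
Proof.
move Hn: #|` below S u| => n; elim: n u Hn => [|n IH] u Hn Hu.
  rewrite mul0r addr0; apply/le_anti; rewrite fmin_le // andbT leNgt.
  apply/negP => Hlt; move/eqP: Hn; rewrite cardfs_eq0 => /eqP /fsetP /(_ (fmin S)).
  by rewrite !inE /= fmin_mem // Hlt.
have Hb : below S u != fset0 by rewrite -cardfs_gt0 Hn.
have Hc : #|` below S (fmax (below S u))| = n by move: (card_below_pred Hb); rewrite Hn => -[].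
have := Hgap Hu Hb; rewrite (IH _ Hc (below_fmax_mem Hb)) -natr1 => E.
by rewrite -(subrK (fmin S + n%:R * d) u) E; ring.
Qed.

Lemma card_below_onto j : (j < #|` S|)%N -> exists2 u, u \in S & #|` below S u| = j.
Proof.
move=> Hj.
have count_down i : (i < #|` S|)%N -> exists2 u, u \in S & #|` below S u| = (#|` S|.-1 - i)%N.
  elim: i => [|i IH] Hi; first by exists (fmax S); rewrite ?fmax_mem ?card_below_fmax ?subn0.
  have [u Hu Hc] := IH (ltnW Hi).
  have Hb : below S u != fset0 by rewrite -cardfs_gt0 Hc; lia.
  exists (fmax (below S u)); first exact: below_fmax_mem.
  by move: (card_below_pred Hb); rewrite Hc; lia.
have [u Hu Hc] := count_down (#|` S|.-1 - j)%N ltac:(lia).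
by exists u; rewrite // Hc; lia.
Qed.

Lemma is_ap_of_gaps : is_ap S (fmin S) d #|` S|.
Proof.
move=> u; split => [Hu|[j /card_below_onto [v Hv <-] ->]]; last by rewrite -eq_fmin_card_below.
by exists #|` below S u|; [exact: card_below_lt | exact: eq_fmin_card_below].
Qed.

End ConstantGaps.

Lemma is_ap_mem S x0 b q j : is_ap S x0 b q -> (j < q)%N -> x0 + j%:R * b \in S.
Proof. by move=> H Hj; apply/H; exists j. Qed.

Lemma is_ap_fmin S x0 b q : is_ap S x0 b q -> 0 < b -> (0 < q)%N -> fmin S = x0.
Proof.
move=> H Hb Hq; apply: fmin_eq; first by have := is_ap_mem H Hq; rewrite mul0r addr0.
by move=> y /H [j _ ->]; rewrite lerDl mulr_ge0 // ltW.
Qed.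

Lemma is_ap_fmax S x0 b q : is_ap S x0 b q -> 0 < b -> (0 < q)%N ->
  fmax S = x0 + (q.-1)%:R * b.
Proof.
move=> H Hb Hq; apply: fmax_eq; first by apply: (is_ap_mem H); lia.
by move=> y /H [j Hj ->]; rewrite lerD2l ler_wpM2r ?ler_nat ?ltW //; lia.
Qed.

Lemma is_ap1 S b : #|` S| = 1%N -> is_ap S (fmin S) b 1.
Proof.
move=> H1 u; split => [Hu|[j Hj ->]].
  by exists 0%N; rewrite // mul0r addr0; exact: fset1_fmin.
have -> : j = 0%N by lia.
by rewrite mul0r addr0 fmin_mem // -cardfs_gt0 H1.
Qed.

Lemma is_ap_diff_uniq S x0 b x1 b' q : is_ap S x0 b q -> is_ap S x1 b' q ->
  0 < b -> 0 < b' -> (1 < q)%N -> b = b'.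
Proof.
move=> H1 H2 Hb Hb' Hq.
have := is_ap_fmax H2 Hb' (ltnW Hq); rewrite (is_ap_fmax H1 Hb (ltnW Hq)).
rewrite -(is_ap_fmin H1 Hb (ltnW Hq)) (is_ap_fmin H2 Hb' (ltnW Hq)) => /addrI.
by apply: mulfI; rewrite pnatr_eq0 -lt0n; lia.
Qed.

Lemma is_ap_below S x0 b q k : is_ap S x0 b q -> 0 < b -> (0 < k < q)%N ->
  below S (x0 + k%:R * b) != fset0 /\ fmax (below S (x0 + k%:R * b)) = x0 + (k.-1)%:R * b.
Proof.
move=> H Hb Hk.
have Hm : x0 + (k.-1)%:R * b \in below S (x0 + k%:R * b).
  by rewrite !inE /= (is_ap_mem H) ?ltrD2l ?ltr_pM2r ?ltr_nat //=; lia.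
split; first exact: fset_neq0 Hm.
apply: fmax_eq => // y; rewrite !inE /= => /andP [/H [j Hj ->]].
rewrite ltrD2l ltr_pM2r // ltr_nat => Hjk.
by rewrite lerD2l ler_wpM2r ?ler_nat ?ltW //; lia.
Qed.

Lemma affine_of_exchange (f g : nat -> R) m n : (1 < m)%N -> (1 < n)%N ->
  (forall k l, (0 < k < m)%N -> (0 < l < n)%N -> f k.-1 + g l = f k + g l.-1) ->
  (forall k, (k < m)%N -> f k = f 0%N + k%:R * (g 1%N - g 0%N)) /\
  (forall l, (l < n)%N -> g l = g 0%N + l%:R * (g 1%N - g 0%N)).
Proof.
move=> Hm Hn H; split.
  elim=> [|k IH] Hk; first by rewrite mul0r addr0.
  by have := H k.+1 1%N ltac:(lia) ltac:(lia); rewrite /= IH -?natr1 => [E|]; [lra|lia].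
have Hf : f 1%N - f 0%N = g 1%N - g 0%N by have := H 1%N 1%N ltac:(lia) ltac:(lia); lra.
elim=> [|l IH] Hl; first by rewrite mul0r addr0.
by have := H 1%N l.+1 ltac:(lia) ltac:(lia); rewrite /= IH -?natr1 => [E|]; [lra|lia].
Qed.

End ArithmeticProgressions.

Section PlaneSets.
Variable R : realType.
Implicit Types (A B : {fset R * R}) (t x y : R).

Definition xproj A : {fset R} := [fset p.1 | p in A].
Definition column A x : {fset R} := [fset p.2 | p in [fset q in A | q.1 == x]].
Definition cut_lt A t := [fset q in A | q.1 < t].
Definition cut_le A t := [fset q in A | q.1 <= t].

Lemma sumsetP A B z :
  reflect (exists2 a, a \in A & exists2 b, b \in B & z = (a.1 + b.1, a.2 + b.2))
    (z \in sumset A B).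
Proof. exact: imfset2P. Qed.

Lemma sumset_mem A B a b : a \in A -> b \in B -> (a.1 + b.1, a.2 + b.2) \in sumset A B.
Proof. by move=> Ha Hb; apply/sumsetP; exists a => //; exists b. Qed.

Lemma sumsetC A B : sumset A B = sumset B A.
Proof.
by apply/fsetP => z; apply/sumsetP/sumsetP => -[a Ha [b Hb ->]];
  exists b => //; exists a => //; rewrite addrC [a.2 + _]addrC.
Qed.

Lemma xprojP A x : reflect (exists2 p, p \in A & x = p.1) (x \in xproj A).
Proof. exact: imfsetP. Qed.

Lemma xproj_mem A p : p \in A -> p.1 \in xproj A.
Proof. by move=> Hp; apply/xprojP; exists p. Qed.

Lemma xproj_neq0 A : A != fset0 -> xproj A != fset0.
Proof. by case/fset0Pn => p /xproj_mem /fset_neq0. Qed.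

Lemma xproj_sumset A B : xproj (sumset A B) = rsumset (xproj A) (xproj B).
Proof.
apply/fsetP => x; apply/xprojP/rsumsetP => [[p /sumsetP [a Ha [b Hb ->]] ->]|].
  by exists a.1; [exact: xproj_mem | exists b.1 => //; exact: xproj_mem].
by move=> [_ /xprojP [a Ha ->] [_ /xprojP [b Hb ->] ->]]; exists (a.1 + b.1, a.2 + b.2);
  rewrite ?sumset_mem.
Qed.

Lemma columnP A x y : reflect ((x, y) \in A) (y \in column A x).
Proof.
apply: (iffP idP) => [/imfsetP [q]|H].
  by rewrite inE /= => /andP [Hq /eqP <-] ->; rewrite -surjective_pairing.
by apply/imfsetP; exists (x, y); rewrite //= !inE /= H eqxx.
Qed.

Lemma column_neq0 A x : x \in xproj A -> column A x != fset0.
Proof.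
move=> /xprojP [p Hp ->]; apply: (@fset_neq0 _ _ p.2).
by apply/columnP; rewrite -surjective_pairing.
Qed.

Lemma card_column A x : #|` column A x| = #|` [fset q in A | q.1 == x]|.
Proof.
rewrite card_in_imfset //= => p q; rewrite !inE /= => /andP [_ /eqP Hp] /andP [_ /eqP Hq] E.
by rewrite [p]surjective_pairing [q]surjective_pairing Hp Hq E.
Qed.

Lemma xproj_cut_lt A t : xproj (cut_lt A t) = below (xproj A) t.
Proof.
apply/fsetP => u; rewrite inE /=; apply/xprojP/andP => [[p]|[/xprojP [p Hp ->] Hu]].
  by rewrite inE /= => /andP [Hp Ht] ->; rewrite xproj_mem.
by exists p; rewrite // !inE /= Hu andbT.
Qed.

Lemma xproj_cut_le A t : xproj (cut_le A t) = [fset u in xproj A | u <= t].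
Proof.
apply/fsetP => u; rewrite inE /=; apply/xprojP/andP => [[p]|[/xprojP [p Hp ->] Hu]].
  by rewrite inE /= => /andP [Hp Ht] ->; rewrite xproj_mem.
by exists p; rewrite // !inE /= Hu andbT.
Qed.

Lemma column_cut_lt A t x : x < t -> column (cut_lt A t) x = column A x.
Proof.
move=> Hx; apply/fsetP => y; apply/columnP/columnP; rewrite inE /=; first by case/andP.
by move=> Hxy; rewrite !inE /= Hx andbT.
Qed.

Lemma column_cut_le A t x : x <= t -> column (cut_le A t) x = column A x.
Proof.
move=> Hx; apply/fsetP => y; apply/columnP/columnP; rewrite inE /=; first by case/andP.
by move=> Hxy; rewrite !inE /= Hx andbT.
Qed.

Lemma cut_le_cut_lt A x t : t < x -> cut_le (cut_lt A x) t = cut_le A t.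
Proof.
move=> Ht; apply/fsetP => q; rewrite !inE /=; case: (q \in A) => //=.
by case: (boolP (q.1 <= t)) => H; rewrite ?andbF ?andbT // (le_lt_trans H Ht).
Qed.

Lemma cut_le_fmax A : cut_le A (fmax (xproj A)) = A.
Proof.
by apply/fsetP => q; rewrite !inE /=; case: (boolP (q \in A)) => Hq //=; rewrite fmax_ge ?xproj_mem.
Qed.

Lemma cut_le_neq0 A t : t \in xproj A -> cut_le A t != fset0.
Proof. by move=> /xprojP [p Hp ->]; apply: (@fset_neq0 _ _ p); rewrite !inE /= Hp lexx. Qed.

Lemma fmax_xproj_cut_le A t : t \in xproj A -> fmax (xproj (cut_le A t)) = t.
Proof.
move=> Ht; apply: fmax_eq; first by rewrite xproj_cut_le !inE /= Ht lexx.
by move=> y; rewrite xproj_cut_le !inE /= => /andP [].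
Qed.

Lemma xproj_cut_lt_cut_le A t : xproj (cut_lt (cut_le A t) t) = below (xproj A) t.
Proof.
apply/fsetP => u; rewrite xproj_cut_lt xproj_cut_le !inE /=.
by case: (u \in xproj A); case: (boolP (u < t)) => H; rewrite ?andbF ?andbT ?ltW.
Qed.

Lemma card_xproj_gt1 A : ~ in_a_line A -> A != fset0 -> (1 < #|` xproj A|)%N.
Proof.
move=> HL HA; rewrite ltnNge; apply/negP => H1; apply: HL.
exists 1, 0, (fmax (xproj A)); split; first by left; exact: oner_neq0.
move=> p Hp; rewrite mul1r mul0r addr0.
have : #|` xproj A| = 1%N by move: (xproj_neq0 HA); rewrite -cardfs_gt0; lia.
by move/eqP/cardfs1P => [x Ex]; move: (fmax_mem (xproj_neq0 HA)) (xproj_mem Hp);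
  rewrite Ex !in_fset1 => /eqP -> /eqP.
Qed.

Lemma in_a_line_of_singleton_columns (C : {fset R * R}) x0 d q M D :
  0 < d -> is_ap (xproj C) x0 d q ->
  (forall l, (l < q)%N -> #|` column C (x0 + l%:R * d)| = 1%N) ->
  (forall l, (l < q)%N -> fmin (column C (x0 + l%:R * d)) = M + l%:R * D) ->
  in_a_line C.
Proof.
move=> Hd HAP H1 Hmin; exists D, (- d), (D * x0 - d * M).
split; first by right; rewrite oppr_eq0 gt_eqF.
move=> p Hp; have /HAP [l Hl E1] := xproj_mem Hp.
have Hc : p.2 \in column C (x0 + l%:R * d) by apply/columnP; rewrite -E1 -surjective_pairing.
rewrite E1 (fset1_fmin (H1 _ Hl) Hc) Hmin //; ring.
Qed.

End PlaneSets.

Notation lastx A := (fmax (xproj A)).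
Notation lastcol A := (column A (lastx A)).
Notation init A := (cut_lt A (lastx A)).

Section RemovingTheLastColumn.
Variable R : realType.
Implicit Types (A B : {fset R * R}).

Lemma card_init A : #|` A| = (#|` init A| + #|` lastcol A|)%N.
Proof.
rewrite card_column -(cardfsID [fset q in A | q.1 < lastx A] A).
congr (_ + _)%N; congr (#|` _|); apply/fsetP => q; rewrite !inE /=.
  by case: (q \in A); rewrite ?andbF ?andbT.
case: (boolP (q \in A)) => Hq; rewrite ?andbF //= ?andbT.
have := fmax_ge (xproj_mem Hq); rewrite le_eqVlt.
by case: eqP => [->|_] /=; rewrite ?ltxx // => ->.
Qed.

Lemma card_xproj_init A : A != fset0 -> #|` xproj (init A)| = (#|` xproj A|).-1.
Proof. by move=> HA; rewrite xproj_cut_lt card_below_fmax // xproj_neq0. Qed.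

Lemma init_neq0 A : (1 < #|` xproj A|)%N -> init A != fset0.
Proof.
move/below_fmax_neq0; rewrite -xproj_cut_lt; apply: contraNneq => ->.
by rewrite /xproj imfset0.
Qed.

Lemma fmax_init_lt A : init A != fset0 -> lastx (init A) < lastx A.
Proof. by move/xproj_neq0; rewrite xproj_cut_lt; exact: below_fmax_lt. Qed.

Lemma card_xproj_gt1_of_mem A t : t \in xproj A -> t != lastx A -> (1 < #|` xproj A|)%N.
Proof.
move=> Ht Hne; have HS := fset_neq0 Ht.
have : t \in below (xproj A) (lastx A) by rewrite !inE /= Ht fmax_lt.
by move/fset_neq0; rewrite -cardfs_gt0 card_below_fmax //; lia.
Qed.

Lemma column_sumset_last A B : A != fset0 -> B != fset0 ->
  column (sumset A B) (lastx A + lastx B) = rsumset (lastcol A) (lastcol B).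
Proof.
move=> HA HB; apply/fsetP => z; apply/columnP/rsumsetP => [|[u /columnP Hu [v /columnP Hv ->]]].
  move=> /sumsetP [a Ha [b Hb [E1 E2]]].
  have Ha1 : a.1 <= lastx A by rewrite fmax_ge ?xproj_mem.
  have Hb1 : b.1 <= lastx B by rewrite fmax_ge ?xproj_mem.
  have Ea : a.1 = lastx A by lra.
  have Eb : b.1 = lastx B by lra.
  by exists a.2; [|exists b.2]; rewrite //; apply/columnP; rewrite -?Ea -?Eb -surjective_pairing.
exact: (sumset_mem Hu Hv).
Qed.

Definition top_sum A B : {fset R * R} :=
  [fset (lastx A + lastx B, z) | z in rsumset (lastcol A) (lastcol B)].

Lemma top_sumC A B : top_sum A B = top_sum B A.
Proof. by rewrite /top_sum addrC rsumsetC. Qed.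

Lemma card_top_sum A B : #|` top_sum A B| = #|` rsumset (lastcol A) (lastcol B)|.
Proof. by rewrite card_imfset //= => u v []. Qed.

Lemma sumset_init_top_sub A B : A != fset0 -> B != fset0 ->
  sumset (init A) B `|` top_sum A B `<=` sumset A B.
Proof.
move=> HA HB; apply/fsubsetP => z; rewrite in_fsetU.
case/orP => [/sumsetP [a + [b Hb ->]]|/imfsetP [w + ->]].
  by rewrite !inE => /andP [Ha _]; exact: sumset_mem.
by rewrite -column_sumset_last // => /columnP.
Qed.

Lemma sumset_init_top_disjoint A B : sumset (init A) B `&` top_sum A B = fset0.
Proof.
apply/fsetP => z; rewrite in_fsetI in_fset0; apply/negbTE/negP.
move=> /andP [/sumsetP [a + [b Hb ->]] /imfsetP [w _ [E1 _]]].
rewrite !inE /= => /andP [_ Hlt].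
have : b.1 <= lastx B by rewrite fmax_ge ?xproj_mem.
lra.
Qed.

Lemma card_sumset_init_top A B : A != fset0 -> B != fset0 ->
  (#|` sumset (init A) B| + #|` rsumset (lastcol A) (lastcol B)| <= #|` sumset A B|)%N.
Proof.
move=> HA HB; have := fsubset_leq_card (sumset_init_top_sub HA HB).
by rewrite cardfsU sumset_init_top_disjoint cardfs0 subn0 card_top_sum.
Qed.

Lemma sumset_init_top A B : A != fset0 -> B != fset0 ->
  (#|` sumset (init A) B| + #|` rsumset (lastcol A) (lastcol B)| = #|` sumset A B|)%N ->
  sumset A B = sumset (init A) B `|` top_sum A B.
Proof.
move=> HA HB E; apply/esym/fsetP/(fsubset_cardP _ (sumset_init_top_sub HA HB)).
by rewrite cardfsU sumset_init_top_disjoint cardfs0 subn0 card_top_sum.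
Qed.

End RemovingTheLastColumn.

Section Deficiency.
Variable R : realType.
Implicit Types (A B : {fset R * R}) (X Y : {fset R}).

Definition ncols A : R := (#|` xproj A|)%:R.

Definition deficiency A B : R :=
  (#|` sumset A B|)%:R + (ncols A + ncols B - 1)
  - ((#|` A|)%:R / ncols A + (#|` B|)%:R / ncols B) * (ncols A + ncols B - 1).

Definition cd_excess X Y : R := (#|` rsumset X Y|)%:R + 1 - (#|` X|)%:R - (#|` Y|)%:R.

Definition top_gain A B : R :=
  (#|` sumset A B|)%:R - (#|` sumset (init A) B|)%:R - (#|` rsumset (lastcol A) (lastcol B)|)%:R.

Definition imbalance A B : R :=
  ((#|` A|)%:R / ncols A - (#|` lastcol A|)%:R) * (ncols B - 1)
  - ((#|` B|)%:R / ncols B - (#|` lastcol B|)%:R) * (ncols A - 1).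

Lemma deficiencyC A B : deficiency A B = deficiency B A.
Proof. by rewrite /deficiency sumsetC (addrC (ncols A)) (addrC (_ / ncols A)). Qed.

Lemma imbalanceC A B : imbalance B A = - imbalance A B.
Proof. by rewrite /imbalance opprB. Qed.

Lemma cd_excessC X Y : cd_excess X Y = cd_excess Y X.
Proof. by rewrite /cd_excess rsumsetC; lra. Qed.

Lemma cd_excess_ge0 X Y : X != fset0 -> Y != fset0 -> 0 <= cd_excess X Y.
Proof.
by move=> HX HY; have := cauchy_davenport HX HY; rewrite -(ler_nat R) !natrD /cd_excess; lra.
Qed.

Lemma top_gain_ge0 A B : A != fset0 -> B != fset0 -> 0 <= top_gain A B.
Proof.
by move=> HA HB; have := card_sumset_init_top HA HB; rewrite -(ler_nat R) natrD /top_gain; lra.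
Qed.

Lemma ncols_gt0 A : A != fset0 -> 0 < ncols A.
Proof. by move=> HA; rewrite /ncols ltr0n cardfs_gt0 xproj_neq0. Qed.

Lemma deficiency_init A B : A != fset0 -> B != fset0 -> (1 < #|` xproj A|)%N ->
  deficiency A B = imbalance A B / (ncols A - 1) + top_gain A B
    + cd_excess (lastcol A) (lastcol B) + deficiency (init A) B.
Proof.
move=> HA HB Hm.
have EA : (#|` A|)%:R = (#|` init A|)%:R + (#|` lastcol A|)%:R :> R by rewrite {1}card_init natrD.
have Em : ncols (init A) = ncols A - 1.
  by rewrite /ncols card_xproj_init // -subn1 natrB //; lia.
have Hm1 : 1 < ncols A by rewrite /ncols ltr1n.
have HnB := ncols_gt0 HB.
rewrite /deficiency /top_gain /cd_excess /imbalance Em EA; field.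
by rewrite (gt_eqF HnB) subr_eq0 (gt_eqF Hm1) (gt_eqF (lt_trans ltr01 Hm1)).
Qed.

Lemma single_column A : A != fset0 -> ~~ (1 < #|` xproj A|)%N ->
  ncols A = 1 /\ (#|` A|)%:R = (#|` lastcol A|)%:R :> R.
Proof.
move=> HA Hm; have H1 : #|` xproj A| = 1%N.
  by move: (xproj_neq0 HA); rewrite -cardfs_gt0; lia.
have Hinit : init A = fset0.
  by apply/eqP/negPn/negP => /xproj_neq0; rewrite -cardfs_gt0 card_xproj_init // H1.
by rewrite /ncols H1 {1}card_init Hinit cardfs0.
Qed.

Lemma deficiency_single_columns A B : A != fset0 -> B != fset0 ->
  ~~ (1 < #|` xproj A|)%N -> ~~ (1 < #|` xproj B|)%N ->
  deficiency A B = (#|` sumset A B|)%:R - (#|` rsumset (lastcol A) (lastcol B)|)%:R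
    + cd_excess (lastcol A) (lastcol B).
Proof.
move=> HA HB HmA HmB; have [E1 E2] := single_column HA HmA; have [E3 E4] := single_column HB HmB.
by rewrite /deficiency /cd_excess E1 E2 E3 E4 !divr1; lra.
Qed.

Lemma imbalance_single_column A B : B != fset0 -> ~~ (1 < #|` xproj B|)%N -> imbalance A B = 0.
Proof.
move=> HB Hm; have [E1 E2] := single_column HB Hm.
by rewrite /imbalance E1 E2 divr1 !subrr mulr0 mul0r subrr.
Qed.

Lemma card_rsumset_last_le A B : A != fset0 -> B != fset0 ->
  (#|` rsumset (lastcol A) (lastcol B)|)%:R <= (#|` sumset A B|)%:R :> R.
Proof.
move=> HA HB; have := card_sumset_init_top HA HB; rewrite -(ler_nat R) natrD.
by have := ler0n R #|` sumset (init A) B|; lra.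
Qed.

Lemma lastcol_neq0 A : A != fset0 -> lastcol A != fset0.
Proof. by move=> HA; rewrite column_neq0 ?fmax_mem ?xproj_neq0. Qed.

Lemma deficiency_init_ge0 A B : A != fset0 -> B != fset0 -> (1 < #|` xproj A|)%N ->
  0 <= imbalance A B -> 0 <= deficiency (init A) B -> 0 <= deficiency A B.
Proof.
move=> HA HB Hm HK HD; rewrite deficiency_init //.
have : 0 <= imbalance A B / (ncols A - 1) by rewrite divr_ge0 // subr_ge0 /ncols ler1n ltnW.
have := top_gain_ge0 HA HB; have := cd_excess_ge0 (lastcol_neq0 HA) (lastcol_neq0 HB).
lra.
Qed.

(* Induction on the total number of columns, removing a column from whichever set
   makes [imbalance] nonnegative. *)
Lemma deficiency_ge0 A B : A != fset0 -> B != fset0 -> 0 <= deficiency A B.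
Proof.
move Hk: (#|` xproj A| + #|` xproj B|)%N => k.
elim: k A B Hk => [|k IH] A B Hk HA HB.
  by move: (xproj_neq0 HA); rewrite -cardfs_gt0; lia.
have IH_init C D : C != fset0 -> D != fset0 -> (1 < #|` xproj C|)%N ->
    (#|` xproj C| + #|` xproj D| = k.+1)%N -> 0 <= deficiency (init C) D.
  move=> HC HD Hm Hk'; apply: IH (init_neq0 Hm) HD.
  by rewrite card_xproj_init //; lia.
have [HmA|HmA] := boolP (1 < #|` xproj A|)%N; have [HmB|HmB] := boolP (1 < #|` xproj B|)%N.
- have [HK|HK] := lerP 0 (imbalance A B).
    by apply: deficiency_init_ge0 => //; apply: IH_init.
  rewrite deficiencyC; apply: deficiency_init_ge0 => //.
    by rewrite imbalanceC; lra.
  by apply: IH_init; rewrite // addnC.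
- by apply: deficiency_init_ge0; rewrite ?imbalance_single_column //; apply: IH_init.
- rewrite deficiencyC; apply: deficiency_init_ge0; rewrite ?imbalance_single_column //.
  by apply: IH_init; rewrite // addnC.
- rewrite deficiency_single_columns //.
  have := card_rsumset_last_le HA HB; have := cd_excess_ge0 (lastcol_neq0 HA) (lastcol_neq0 HB).
  lra.
Qed.

End Deficiency.

Section EqualityCase.
Variable R : realType.
Implicit Types (A B : {fset R * R}).

Lemma imbalance_ge0 A B : A != fset0 -> B != fset0 -> deficiency A B = 0 -> 0 <= imbalance A B.
Proof.
move=> HA HB H0.
have [Hn|Hn] := boolP (1 < #|` xproj B|)%N; last by rewrite imbalance_single_column.
have Hn1 : 0 < ncols B - 1 by rewrite subr_gt0 /ncols ltr1n.
move: H0; rewrite deficiencyC deficiency_init // => H0.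
have := top_gain_ge0 HB HA; have := cd_excess_ge0 (lastcol_neq0 HB) (lastcol_neq0 HA).
have := deficiency_ge0 (init_neq0 Hn) HA => h1 h2 h3.
have : imbalance B A / (ncols B - 1) <= 0 by lra.
by rewrite ler_pdivrMr // mul0r imbalanceC oppr_le0.
Qed.

Lemma deficiency0_init A B : A != fset0 -> B != fset0 -> deficiency A B = 0 ->
  (1 < #|` xproj A|)%N ->
  [/\ deficiency (init A) B = 0, top_gain A B = 0 & cd_excess (lastcol A) (lastcol B) = 0].
Proof.
move=> HA HB H0 Hm.
have : 0 <= imbalance A B / (ncols A - 1).
  by rewrite divr_ge0 ?imbalance_ge0 // subr_ge0 /ncols ler1n ltnW.
move: H0; rewrite deficiency_init // => H0.
have := top_gain_ge0 HA HB; have := cd_excess_ge0 (lastcol_neq0 HA) (lastcol_neq0 HB).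
have := deficiency_ge0 (init_neq0 Hm) HB => h1 h2 h3 h4.
by split; lra.
Qed.

Lemma cd_excess_lastcol_eq0 A B : A != fset0 -> B != fset0 -> deficiency A B = 0 ->
  cd_excess (lastcol A) (lastcol B) = 0.
Proof.
move=> HA HB H0; have [Hm|HmA] := boolP (1 < #|` xproj A|)%N.
  by case: (deficiency0_init HA HB H0 Hm).
have [Hn|HmB] := boolP (1 < #|` xproj B|)%N.
  by rewrite deficiencyC in H0; case: (deficiency0_init HB HA H0 Hn); rewrite cd_excessC.
move: H0; rewrite deficiency_single_columns //.
have := card_rsumset_last_le HA HB; have := cd_excess_ge0 (lastcol_neq0 HA) (lastcol_neq0 HB).
lra.
Qed.

Lemma sumset_init_of_top_gain0 A B : A != fset0 -> B != fset0 -> top_gain A B = 0 ->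
  sumset (init A) B = sumset A B `\` top_sum A B.
Proof.
move=> HA HB H0; rewrite (sumset_init_top HA HB).
  rewrite fsetDUl fsetDv fsetU0; apply/esym/fsetDidPl.
  by rewrite -fsetI_eq0 sumset_init_top_disjoint.
by apply/eqP; rewrite -(eqr_nat R) natrD; apply/eqP; move: H0; rewrite /top_gain; lra.
Qed.

(* Both [init A + B] and [A + init B] are [A + B] minus its last column. *)
Lemma deficiency0_last_exchange A B : A != fset0 -> B != fset0 -> deficiency A B = 0 ->
  (1 < #|` xproj A|)%N -> (1 < #|` xproj B|)%N ->
  lastx (init A) + lastx B = lastx A + lastx (init B) /\
  rsumset (column A (lastx (init A))) (lastcol B)
    = rsumset (lastcol A) (column B (lastx (init B))).
Proof.
move=> HA HB H0 Hm Hn.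
have HA' := init_neq0 Hm; have HB' := init_neq0 Hn.
have [_ EA _] := deficiency0_init HA HB H0 Hm.
rewrite deficiencyC in H0; have [_ EB _] := deficiency0_init HB HA H0 Hn.
have EE : sumset (init A) B = sumset A (init B).
  by rewrite sumset_init_of_top_gain0 // [RHS]sumsetC sumset_init_of_top_gain0 // sumsetC top_sumC.
have Ex : lastx (init A) + lastx B = lastx A + lastx (init B).
  have := congr1 (fun S => fmax (xproj S)) EE.
  by rewrite /= !xproj_sumset !fmax_rsumset ?xproj_neq0.
split => //; have := congr1 (fun S => column S (lastx (init A) + lastx B)) EE.
rewrite /= {2}Ex !column_sumset_last // !column_cut_lt //; exact: fmax_init_lt.
Qed.

Lemma deficiency0_cut_le A B : A != fset0 -> B != fset0 -> deficiency A B = 0 ->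
  forall t s, t \in xproj A -> s \in xproj B -> deficiency (cut_le A t) (cut_le B s) = 0.
Proof.
move Hk: (#|` xproj A| + #|` xproj B|)%N => k.
elim: k A B Hk => [|k IH] A B Hk HA HB H0 t s Ht Hs.
  by move: (xproj_neq0 HA); rewrite -cardfs_gt0; lia.
have [Htx|Htx] := eqVneq t (lastx A).
  have [Hsy|Hsy] := eqVneq s (lastx B); first by rewrite Htx Hsy !cut_le_fmax.
  have Hn := card_xproj_gt1_of_mem Hs Hsy.
  rewrite deficiencyC in H0; have [H1 _ _] := deficiency0_init HB HA H0 Hn.
  have Hlt := fmax_lt Hs Hsy.
  rewrite -(cut_le_cut_lt _ Hlt) deficiencyC; apply: (IH _ A) => //.
  - by rewrite card_xproj_init //; lia.
  - exact: init_neq0.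
  - by rewrite xproj_cut_lt !inE /= Hs.
have Hm := card_xproj_gt1_of_mem Ht Htx.
have [H1 _ _] := deficiency0_init HA HB H0 Hm.
have Hlt := fmax_lt Ht Htx.
rewrite -(cut_le_cut_lt _ Hlt); apply: IH => //.
- by rewrite card_xproj_init //; lia.
- exact: init_neq0.
- by rewrite xproj_cut_lt !inE /= Ht.
Qed.

End EqualityCase.

Section CriticalPairs.
Variable R : realType.
Implicit Types (A B : {fset R * R}) (X Y : {fset R}).

Lemma card_xproj_cut_le_gt1 A t : t \in xproj A -> below (xproj A) t != fset0 ->
  (1 < #|` xproj (cut_le A t)|)%N.
Proof.
move=> Ht Hb; have Hlt := below_fmax_lt Hb.
apply: (@card_xproj_gt1_of_mem _ _ (fmax (below (xproj A) t))).
  by rewrite xproj_cut_le !inE /= below_fmax_mem // ltW.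
by rewrite fmax_xproj_cut_le // lt_eqF.
Qed.

Section Columns.
Variables A B : {fset R * R}.
Hypotheses (HA : A != fset0) (HB : B != fset0) (H0 : deficiency A B = 0).

Lemma cd_excess_columns t s : t \in xproj A -> s \in xproj B ->
  cd_excess (column A t) (column B s) = 0.
Proof.
move=> Ht Hs.
have := cd_excess_lastcol_eq0 (cut_le_neq0 Ht) (cut_le_neq0 Hs) (deficiency0_cut_le HA HB H0 Ht Hs).
by rewrite !fmax_xproj_cut_le // !column_cut_le.
Qed.

Lemma columns_exchange t s : t \in xproj A -> s \in xproj B ->
  below (xproj A) t != fset0 -> below (xproj B) s != fset0 ->
  fmax (below (xproj A) t) + s = t + fmax (below (xproj B) s) /\
  rsumset (column A (fmax (below (xproj A) t))) (column B s)
    = rsumset (column A t) (column B (fmax (below (xproj B) s))).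
Proof.
move=> Ht Hs HbA HbB.
have := deficiency0_last_exchange (cut_le_neq0 Ht) (cut_le_neq0 Hs)
  (deficiency0_cut_le HA HB H0 Ht Hs) (card_xproj_cut_le_gt1 Ht HbA) (card_xproj_cut_le_gt1 Hs HbB).
by rewrite !fmax_xproj_cut_le // !xproj_cut_lt_cut_le !column_cut_le // ltW // below_fmax_lt.
Qed.

(* The gap between two consecutive abscissae of [A] equals the last gap of [B], and
   symmetrically. *)
Lemma xproj_common_ap : (1 < #|` xproj A|)%N -> (1 < #|` xproj B|)%N ->
  exists2 d, 0 < d &
    is_ap (xproj A) (fmin (xproj A)) d #|` xproj A| /\
    is_ap (xproj B) (fmin (xproj B)) d #|` xproj B|.
Proof.
move=> Hm Hn.
have HX := fmax_mem (xproj_neq0 HA); have HY := fmax_mem (xproj_neq0 HB).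
have bX := below_fmax_neq0 Hm; have bY := below_fmax_neq0 Hn.
set d := lastx B - fmax (below (xproj B) (lastx B)).
have gapA t : t \in xproj A -> below (xproj A) t != fset0 -> t - fmax (below (xproj A) t) = d.
  by move=> Ht Hbt; have [E _] := columns_exchange Ht HY Hbt bY; rewrite /d; lra.
exists d; first by rewrite subr_gt0 below_fmax_lt.
split; apply: is_ap_of_gaps; rewrite ?xproj_neq0 // => s Hs Hbs.
have [E _] := columns_exchange HX Hs bX Hbs; have := gapA _ HX bX; lra.
Qed.

End Columns.

Definition embed_axis X : {fset R * R} := [fset (x, 0) | x in X].

Lemma xproj_embed_axis X : xproj (embed_axis X) = X.
Proof.
apply/fsetP => x; apply/xprojP/idP => [[p /imfsetP [y Hy ->] ->] //|Hx].
by exists (x, 0); rewrite ?in_imfset.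
Qed.

Lemma card_embed_axis X : #|` embed_axis X| = #|` X|.
Proof. by rewrite card_imfset //= => u v []. Qed.

Lemma sumset_embed_axis X Y : sumset (embed_axis X) (embed_axis Y) = embed_axis (rsumset X Y).
Proof.
apply/fsetP => z; apply/sumsetP/imfsetP.
  move=> [_ /imfsetP [x Hx ->] [_ /imfsetP [y Hy ->] ->]].
  by exists (x + y); rewrite /= ?addr0 ?rsumset_mem.
move=> [_ /rsumsetP [x Hx [y Hy ->]] ->].
by exists (x, 0); rewrite ?in_imfset //; exists (y, 0); rewrite ?in_imfset //= addr0.
Qed.

Lemma embed_axis_neq0 X : X != fset0 -> embed_axis X != fset0.
Proof. by rewrite -!cardfs_gt0 card_embed_axis. Qed.

Lemma deficiency_embed_axis X Y : X != fset0 -> Y != fset0 ->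
  deficiency (embed_axis X) (embed_axis Y) = cd_excess X Y.
Proof.
rewrite -!cardfs_gt0 => HX HY.
rewrite /deficiency /cd_excess /ncols !xproj_embed_axis !card_embed_axis sumset_embed_axis.
by rewrite card_embed_axis !divff ?pnatr_eq0 -?lt0n //; lra.
Qed.

(* Inverse Cauchy-Davenport, obtained from the planar case by embedding the sets in a line. *)
Lemma rsumset_critical_ap X Y : (1 < #|` X|)%N -> (1 < #|` Y|)%N -> cd_excess X Y = 0 ->
  exists2 b, 0 < b & is_ap X (fmin X) b #|` X| /\ is_ap Y (fmin Y) b #|` Y|.
Proof.
move=> HX HY H0; have HX0 : X != fset0 by rewrite -cardfs_gt0; lia.
have HY0 : Y != fset0 by rewrite -cardfs_gt0; lia.
have := xproj_common_ap (embed_axis_neq0 HX0) (embed_axis_neq0 HY0).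
by rewrite deficiency_embed_axis // !xproj_embed_axis; apply.
Qed.

Lemma is_ap_of_critical X Y b : X != fset0 -> (1 < #|` Y|)%N -> 0 < b ->
  is_ap Y (fmin Y) b #|` Y| -> cd_excess X Y = 0 -> is_ap X (fmin X) b #|` X|.
Proof.
move=> HX HY Hb APY H0; have [HX1|HX1] := boolP (1 < #|` X|)%N.
  have [b' Hb' [APX' APY']] := rsumset_critical_ap HX1 HY H0.
  by rewrite (is_ap_diff_uniq APY APY' Hb Hb' HY).
have E1 : #|` X| = 1%N by move: HX; rewrite -cardfs_gt0; lia.
by rewrite E1; exact: is_ap1.
Qed.

End CriticalPairs.

Section ColumnStructure.
Variable R : realType.
Implicit Types (C : {fset R * R}).

Definition nth_column C (d : R) (k : nat) := column C (fmin (xproj C) + k%:R * d).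

Lemma nth_column_neq0 C d q k : is_ap (xproj C) (fmin (xproj C)) d q -> (k < q)%N ->
  nth_column C d k != fset0.
Proof. by move=> H Hk; apply: column_neq0; exact: is_ap_mem H Hk. Qed.

Lemma exists_large_column C d q M D : ~ in_a_line C -> 0 < d ->
  is_ap (xproj C) (fmin (xproj C)) d q ->
  (forall k, (k < q)%N -> fmin (nth_column C d k) = M + k%:R * D) ->
  exists2 k, (k < q)%N & (1 < #|` nth_column C d k|)%N.
Proof.
move=> HL Hd HAP Hmin.
have [/hasP [k + Hk]|Hno] := boolP (has (fun k => 1 < #|` nth_column C d k|)%N (iota 0 q)).
  by rewrite mem_iota => Hkq; exists k.
case: HL; apply: (in_a_line_of_singleton_columns Hd HAP _ Hmin) => k Hk.
have := hasPn Hno k; rewrite mem_iota add0n Hk => /(_ isT).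
by have := nth_column_neq0 HAP Hk; rewrite -cardfs_gt0 -/(nth_column C d k); lia.
Qed.

Lemma mem_nth_column C d q k j b :
  (k < q)%N -> is_ap (nth_column C d k) (fmin (nth_column C d k)) b #|` nth_column C d k| ->
  (j < #|` nth_column C d k|)%N ->
  (fmin (xproj C) + k%:R * d, fmin (nth_column C d k) + j%:R * b) \in C.
Proof. by move=> Hk HAP Hj; apply/columnP; exact: is_ap_mem HAP Hj. Qed.

Lemma nth_column_param C d q b M D :
  is_ap (xproj C) (fmin (xproj C)) d q ->
  (forall k, (k < q)%N ->
    is_ap (nth_column C d k) (fmin (nth_column C d k)) b #|` nth_column C d k|) ->
  (forall k, (k < q)%N -> fmin (nth_column C d k) = M + k%:R * D) ->
  forall p, p \in C <-> exists k j, [/\ (k < q)%N, (j < #|` nth_column C d k|)%N &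
    p = (fmin (xproj C) + k%:R * d, M + k%:R * D + j%:R * b)].
Proof.
move=> APx APc Hmin p; split => [Hp|[k [j [Hk Hj ->]]]]; last first.
  by rewrite -(Hmin k Hk); exact: mem_nth_column (APc k Hk) Hj.
have /APx [k Hk E1] := xproj_mem Hp.
have : p.2 \in nth_column C d k by apply/columnP; rewrite -E1 -surjective_pairing.
move=> /(APc k Hk) [j Hj E2]; exists k, j; split => //.
by rewrite [p]surjective_pairing E1 E2 Hmin.
Qed.

Lemma card_nth_column_affine C d q b D E : 0 < b ->
  (forall k, (k < q)%N ->
    is_ap (nth_column C d k) (fmin (nth_column C d k)) b #|` nth_column C d k|) ->
  (forall k, (k < q)%N -> fmin (nth_column C d k) = fmin (nth_column C d 0) + k%:R * D) ->
  (forall k, (k < q)%N -> fmax (nth_column C d k) = fmax (nth_column C d 0) + k%:R * E) ->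
  is_ap (xproj C) (fmin (xproj C)) d q ->
  forall k, (k < q)%N ->
    (#|` nth_column C d k|)%:R * b = (#|` nth_column C d 0|)%:R * b + k%:R * (E - D).
Proof.
move=> Hb APc Hmin Hmax APx k Hk.
have size_fmax i : (i < q)%N ->
    fmax (nth_column C d i) = fmin (nth_column C d i) + ((#|` nth_column C d i|)%:R - 1) * b.
  move=> Hi; have Hc : (0 < #|` nth_column C d i|)%N by rewrite cardfs_gt0 (nth_column_neq0 APx).
  by rewrite (is_ap_fmax (APc i Hi) Hb Hc) -{2}(prednK Hc) -natr1 addrK.
have := size_fmax 0%N (leq_ltn_trans (leq0n k) Hk).
by have := size_fmax k Hk; rewrite (Hmax k Hk) (Hmin k Hk); lra.
Qed.

End ColumnStructure.

Section Trapezoids.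
Variable R : realType.

Lemma exists_nat_of_ge0 (z : int) : 0 <= z%:~R :> R -> exists k : nat, z = k.
Proof. by rewrite ler0z => /gez0_abs <-; exists `|z|%N. Qed.

Lemma in_T_grid q h (r : int) (e : R) p :
  in_T q h (e + r%:~R) e p <-> exists k j : nat,
    [/\ (k < q)%N, (j.+1)%:R <= h%:R + k%:R * r%:~R :> R & p = (k%:R, k%:R * e + j%:R)].
Proof.
split=> [[[a [b ->]] /= [H1 [H2 [H3 H4]]]]|[k [j [Hk Hj ->]]]].
  have [k Ek] := exists_nat_of_ge0 H1.
  have [j Ej] : exists j : nat, a = j by apply: exists_nat_of_ge0; lra.
  subst a b; rewrite -!pmulrn in H2 H3 *.
  exists k, j; split; rewrite ?(addrC (k%:R * e)) //.
    by rewrite -(ltr_nat R); move: H2; lra.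
  by rewrite -natr1; move: H3; lra.
split; first by exists j%:Z, k%:Z; rewrite /= addrC.
have : (k.+1)%:R <= q%:R :> R by rewrite ler_nat.
rewrite -!natr1 /= in Hj * => Hq; have := ler0n R k; have := ler0n R j.
by move=> *; split; [lra | split; [lra | split; lra]].
Qed.

Lemma std_trapezoid_of_param (C : {fset R * R}) (q h : nat) (r : int) (d b D x0 y0 : R)
    (a : nat -> nat) :
  0 < d -> 0 < b -> (0 < q)%N -> (0 < h)%N ->
  (forall k, (k < q)%N -> (0 < a k)%N) ->
  (forall k, (k < q)%N -> (a k)%:R = h%:R + k%:R * r%:~R :> R) ->
  (forall p, p \in C <-> exists k j, [/\ (k < q)%N, (j < a k)%N &
    p = (x0 + k%:R * d, y0 + k%:R * D + j%:R * b)]) ->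
  std_trapezoid (scaled_image d b C) q h (D / b + r%:~R) (D / b).
Proof.
move=> Hd Hb Hq Hh Ha Hsz HC.
have Hd0 : d != 0 by rewrite gt_eqF.
have Hb0 : b != 0 by rewrite gt_eqF.
split=> //; split=> //; split; first by exists r; ring.
split.
  have Hl : (q.-1 < q)%N by lia.
  have Eq : (q.-1)%:R = q%:R - 1 :> R by rewrite -{2}(prednK Hq) -natr1 addrK.
  have := Hsz _ Hl; have : 1 <= (a q.-1)%:R :> R by rewrite ler1n Ha.
  by rewrite Eq; lra.
exists (x0 / d, y0 / b) => p; rewrite in_T_grid; split.
  move=> [_ /HC [k [j [Hk Hj ->]]] ->]; exists k, j; split=> //.
    by rewrite -Hsz // ler_nat.
  by congr (_, _) => /=; field.
move=> [k [j [Hk Hj E]]].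
exists (x0 + k%:R * d, y0 + k%:R * D + j%:R * b).
  by apply/HC; exists k, j; split=> //; rewrite -(ltr_nat R) Hsz //; rewrite -natr1 in Hj; lra.
rewrite [p]surjective_pairing; case: E => /eqP + /eqP.
by rewrite /= !subr_eq => /eqP -> /eqP ->; congr (_, _); field.
Qed.

End Trapezoids.

Section PairStructure.
Variable R : realType.
Variables (A B : {fset R * R}) (d : R).
Hypotheses (HA : A != fset0) (HB : B != fset0) (H0 : deficiency A B = 0).
Hypotheses (Hm : (1 < #|` xproj A|)%N) (Hn : (1 < #|` xproj B|)%N) (Hd : 0 < d).
Hypotheses (APA : is_ap (xproj A) (fmin (xproj A)) d #|` xproj A|)
           (APB : is_ap (xproj B) (fmin (xproj B)) d #|` xproj B|).

Local Notation m := #|` xproj A|.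
Local Notation n := #|` xproj B|.
Local Notation colA := (nth_column A d).
Local Notation colB := (nth_column B d).

Lemma nth_columns_exchange k l : (0 < k < m)%N -> (0 < l < n)%N ->
  rsumset (colA k.-1) (colB l) = rsumset (colA k) (colB l.-1).
Proof.
move=> Hk Hl; have [bA EA] := is_ap_below APA Hd Hk; have [bB EB] := is_ap_below APB Hd Hl.
have Hk' : (k < m)%N by case/andP: Hk.
have Hl' : (l < n)%N by case/andP: Hl.
have [_] := columns_exchange HA HB H0 (is_ap_mem APA Hk') (is_ap_mem APB Hl') bA bB.
by rewrite EA EB.
Qed.

Lemma cd_excess_nth_columns k l : (k < m)%N -> (l < n)%N -> cd_excess (colA k) (colB l) = 0.
Proof.
by move=> Hk Hl; have := cd_excess_columns HA HB H0 (is_ap_mem APA Hk) (is_ap_mem APB Hl).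
Qed.

Lemma fmin_nth_columns :
  (forall k, (k < m)%N -> fmin (colA k) = fmin (colA 0) + k%:R * (fmin (colB 1) - fmin (colB 0))) /\
  (forall l, (l < n)%N -> fmin (colB l) = fmin (colB 0) + l%:R * (fmin (colB 1) - fmin (colB 0))).
Proof.
apply: (affine_of_exchange (f := fun k => fmin (colA k)) (g := fun l => fmin (colB l))) => //.
move=> k l Hk Hl.
by rewrite -!fmin_rsumset ?nth_columns_exchange // ?(nth_column_neq0 APA) ?(nth_column_neq0 APB);
  lia.
Qed.

Lemma fmax_nth_columns :
  (forall k, (k < m)%N -> fmax (colA k) = fmax (colA 0) + k%:R * (fmax (colB 1) - fmax (colB 0))) /\
  (forall l, (l < n)%N -> fmax (colB l) = fmax (colB 0) + l%:R * (fmax (colB 1) - fmax (colB 0))).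
Proof.
apply: (affine_of_exchange (f := fun k => fmax (colA k)) (g := fun l => fmax (colB l))) => //.
move=> k l Hk Hl.
by rewrite -!fmax_rsumset ?nth_columns_exchange // ?(nth_column_neq0 APA) ?(nth_column_neq0 APB);
  lia.
Qed.

Hypotheses (HLA : ~ in_a_line A) (HLB : ~ in_a_line B).

Lemma nth_columns_common_ap : exists2 b, 0 < b &
  (forall k, (k < m)%N -> is_ap (colA k) (fmin (colA k)) b #|` colA k|) /\
  (forall l, (l < n)%N -> is_ap (colB l) (fmin (colB l)) b #|` colB l|).
Proof.
have [LA LB] := fmin_nth_columns.
have [k0 Hk0 Hlarge_k0] := exists_large_column HLA Hd APA LA.
have [l0 Hl0 Hlarge_l0] := exists_large_column HLB Hd APB LB.
have [b Hb [APk0 APl0]] := rsumset_critical_ap Hlarge_k0 Hlarge_l0 (cd_excess_nth_columns Hk0 Hl0).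
exists b => //; split=> [k Hk|l Hl].
  apply: is_ap_of_critical (nth_column_neq0 APA Hk) Hlarge_l0 Hb APl0 _.
  exact: cd_excess_nth_columns.
apply: is_ap_of_critical (nth_column_neq0 APB Hl) Hlarge_k0 Hb APk0 _.
by rewrite cd_excessC cd_excess_nth_columns.
Qed.

Lemma scaled_std_trapezoids : exists2 b, 0 < b & exists (c e : R) (h h' : nat),
  std_trapezoid (scaled_image d b A) m h c e /\ std_trapezoid (scaled_image d b B) n h' c e.
Proof.
have [b Hb [APa APb]] := nth_columns_common_ap.
have [LA LB] := fmin_nth_columns; have [UA UB] := fmax_nth_columns.
set D := fmin (colB 1) - fmin (colB 0) in LA LB.
set E := fmax (colB 1) - fmax (colB 0) in UA UB.
have SA := card_nth_column_affine Hb APa LA UA APA.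
have SB := card_nth_column_affine Hb APb LB UB APB.
set r : int := (#|` colA 1|)%:Z - (#|` colA 0|)%:Z.
have HED : E - D = r%:~R * b.
  by have := SA 1%N Hm; rewrite intrB mul1r; lra.
have Hb0 : b != 0 by rewrite gt_eqF.
have size_affine C q : (forall k, (k < q)%N ->
      (#|` nth_column C d k|)%:R * b = (#|` nth_column C d 0|)%:R * b + k%:R * (E - D)) ->
    forall k, (k < q)%N ->
      (#|` nth_column C d k|)%:R = (#|` nth_column C d 0|)%:R + k%:R * r%:~R :> R.
  by move=> S k Hk; apply: (mulIf Hb0); rewrite S // HED; ring.
exists b => //; exists (D / b + r%:~R), (D / b), #|` colA 0|, #|` colB 0|.
have colA_gt0 k : (k < m)%N -> (0 < #|` colA k|)%N.
  by move=> Hk; rewrite cardfs_gt0 (nth_column_neq0 APA).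
have colB_gt0 l : (l < n)%N -> (0 < #|` colB l|)%N.
  by move=> Hl; rewrite cardfs_gt0 (nth_column_neq0 APB).
have Hm0 : (0 < m)%N by lia.
have Hn0 : (0 < n)%N by lia.
split.
  by apply: std_trapezoid_of_param (nth_column_param APA APa LA); rewrite ?colA_gt0 //;
    exact: size_affine SA.
by apply: std_trapezoid_of_param (nth_column_param APB APb LB); rewrite ?colB_gt0 //;
  exact: size_affine SB.
Qed.

End PairStructure.

Theorem theorem2p2 (R : realType) (A B : {fset R * R}) :
  ~ in_a_line A -> ~ in_a_line B ->
  (0, 0) \in A -> (0, 0) \in B ->
  let m := nvert A in let n := nvert B in
  (#|` sumset A B |)%:R =
    ((#|` A|)%:R / m%:R + (#|` B|)%:R / n%:R - 1) * ((m + n)%:R - 1) :> R ->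
  exists (alpha beta : R), 0 < alpha /\ 0 < beta /\
    exists (c d : R) (h h' : nat),
      std_trapezoid (scaled_image alpha beta A) m h c d /\
      std_trapezoid (scaled_image alpha beta B) n h' c d.
Proof.
move=> HLA HLB /fset_neq0 HA /fset_neq0 HB m n Heq.
have Hm := card_xproj_gt1 HLA HA; have Hn := card_xproj_gt1 HLB HB.
have H0 : deficiency A B = 0.
  by rewrite /deficiency /ncols natrD in Heq *; rewrite Heq; ring.
have [d Hd [APA APB]] := xproj_common_ap HA HB H0 Hm Hn.
have [b Hb trapezoids] := scaled_std_trapezoids HA HB H0 Hm Hn Hd APA APB HLA HLB.
by exists d, b.
Qed.
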